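(* For every $n\in\mathbb N$ the set $\mathbb P^T_n=\{p^{(k)}_n: k\in\mathbb N\}$ is not (R)-dense. Moreover, $\lim_{k\to+\infty}p^{(k+1)}_n/p^{(k)}_n=+\infty$, and $R^d(\mathbb P^T_n)\cap(0,+\infty)=\emptyset$.
   Context: Let $p_n$ denote the $n$-th prime number. Define $p^{(0)}_n=n$ and recursively $p^{(k+1)}_n=p_{p^{(k)}_n}$ for $k\in\mathbb N_0$. For $A\subset\mathbb N$, its ratio set is $R(A)=\{a/b:a,b\in A\}$; $A$ is (R)-dense if $R(A)$ is dense in $(0,+\infty)$. For $B\subset(0,+\infty)$, $B^d$ denotes the set of accumulation points of $B$, and $R^d(A)=(R(A))^d$. *)

From HB Require Import structures.
From mathcomp Require Import all_boot all_order all_algebra.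
From mathcomp Require Import all_classical all_reals all_analysis.
Unset Printing Implicit Defensive.
Import Order.TTheory GRing.Theory Num.Theory.
Local Open Scope classical_set_scope.
Local Open Scope ring_scope.

Definition next_prime (m : nat) : nat :=
  ex_minn (let: exist2 p H1 H2 := prime_above m in
           ex_intro (fun p => (m < p)%N && prime p) p (introT andP (conj H1 H2))).

(* nth_prime n = p_n, the n-th prime, 1-indexed: p_1 = 2, p_2 = 3, ...
   (nth_prime 0 = 0 is a junk value, never used for n >= 1). *)
Fixpoint nth_prime (n : nat) : nat :=
  if n is n'.+1 then next_prime (nth_prime n') else 0%N.

Fixpoint iter_prime (k n : nat) : nat :=
  if k is k'.+1 then nth_prime (iter_prime k' n) else n.

(* P^T_n = { p^(k)_n : k in N }, N = {1,2,...} *)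
Definition primes_tower (n : nat) : set nat :=
  [set m | exists2 k : nat, (0 < k)%N & m = iter_prime k n].

Definition ratio_set (R : realType) (A : set nat) : set R :=
  [set r | exists a b : nat, [/\ A a, A b & r = a%:R / b%:R]].

Definition R_dense (R : realType) (A : set nat) : Prop :=
  forall x y : R, 0 < x -> x < y ->
    exists2 r, ratio_set R A r & x < r < y.

(* Chebyshev's argument (the primes in (n, 2n] divide C(2n, n) <= 4^n) gives
   pi(x) = o(x), i.e. p_m / m -> +oo.  Hence the tower a_k = p^(k)_n is
   lacunary: for every K, eventually a_(k+1) >= K a_k.  A ratio a_i / a_j
   within x/2 of a given x > 0 then has i = j or both indices below a bound
   depending only on x, so only finitely many ratios lie near x and x is not an
   accumulation point.  Were the ratio set dense, 1 would be one. *)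

From HB Require Import structures.
From mathcomp Require Import all_boot all_order all_algebra.
From mathcomp Require Import all_classical all_reals all_analysis.
From mathcomp Require Import zify lra.
Import Order.TTheory GRing.Theory Num.Theory.
Import numFieldNormedType.Exports.
Local Open Scope classical_set_scope.

Lemma next_primeP a : [/\ (a < next_prime a)%N, prime (next_prime a) &
  forall q, (a < q)%N -> prime q -> (next_prime a <= q)%N].
Proof.
rewrite /next_prime; case: ex_minnP => p /andP[ap pp] minp; split => // q aq pq.
by apply: minp; rewrite aq pq.
Qed.

Lemma nth_prime_gt m : (0 < m)%N -> (m < nth_prime m)%N.
Proof.
case: m => // m _; elim: m => [|m IH].
  by have [_ /prime_gt1] := next_primeP 0.
by have [+ _ _] := next_primeP (nth_prime m.+1); exact: leq_ltn_trans.
Qed.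

Definition prime_pi x := count prime (iota 0 x.+1).

Lemma prime_pi_leq x : (prime_pi x <= x.+1)%N.
Proof. by rewrite -[x.+1 in leqRHS](size_iota 0) count_size. Qed.

Lemma prime_piS x : prime_pi x.+1 = prime_pi x + prime x.+1.
Proof. by rewrite /prime_pi -addn1 iotaD count_cat /= addn0. Qed.

Lemma prime_pi_next_prime a : prime_pi (next_prime a) = (prime_pi a).+1.
Proof.
have [ab pb minb] := next_primeP a.
have gap d : (a + d < next_prime a)%N -> prime_pi (a + d) = prime_pi a.
  elim: d => [|d IH] lt; first by rewrite addn0.
  have not_pd : ~~ prime (a + d).+1.
    by apply/negP => /(minb (a + d).+1 (leq_addr d a)); lia.
  by rewrite addnS prime_piS (negbTE not_pd) addn0 IH // ltnW // -addnS.
have lastS : (a + (next_prime a - a.+1)).+1 = next_prime a by lia.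
by rewrite -[in LHS]lastS prime_piS lastS pb gap ?addn1 //; lia.
Qed.

Lemma prime_pi_nth_prime m : prime_pi (nth_prime m) = m.
Proof. by elim: m => //= m IH; rewrite prime_pi_next_prime IH. Qed.

Lemma leq_bin_exp2 m k : ('C(m, k) <= 2 ^ m)%N.
Proof.
elim: m k => [|m IH] [|k] //; first by rewrite bin0 expn_gt0.
by rewrite binS expnS mul2n -addnn leq_add.
Qed.

Lemma prime_dvd_fact p n : prime p -> (p %| n`!) = (p <= n)%N.
Proof.
move=> pp; apply/idP/idP => [|pn]; last by rewrite dvdn_fact // prime_gt0.
elim: n => [|n IH]; first by rewrite dvdn1 => /eqP p1; rewrite p1 in pp.
by rewrite factS Euclid_dvdM // => /orP[/dvdn_leq -> //|/IH/leqW].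
Qed.

Lemma prime_dvd_central_bin n p : prime p -> (n < p <= n + n)%N ->
  p %| 'C(n + n, n).
Proof.
move=> pp /andP[np pnn].
have := @dvdn_fact p (n + n); rewrite prime_gt0 // pnn => /(_ isT).
have := bin_fact (leq_addr n n); rewrite addnK => <-.
by rewrite !Euclid_dvdM // prime_dvd_fact // leqNgt np /= orbF.
Qed.

Lemma prod_primes_dvdn (s : seq nat) X : uniq s -> all prime s ->
  {in s, forall p, p %| X} -> \prod_(p <- s) p %| X.
Proof.
elim: s => [|p s IH] /=; first by rewrite big_nil dvd1n.
move=> /andP[ps us] /andP[pp sp] sX; rewrite big_cons Gauss_dvd.
  by rewrite sX ?mem_head // IH // => q qs; rewrite sX // inE qs orbT.
rewrite prime_coprime // Euclid_dvd_prod // big_has; apply/hasPn => q qs.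
by rewrite dvdn_prime2 ?(allP sp q qs) //; apply: contraNneq ps => ->.
Qed.

Lemma count_primes_central_bound n : (n ^ count prime (iota n.+1 n) <= 4 ^ n)%N.
Proof.
set s := [seq p <- iota n.+1 n | prime p].
have s_gt p : p \in s -> (n < p <= n + n)%N.
  by rewrite mem_filter mem_iota => /andP[_ /andP[-> ?]] /=; lia.
have s_dvd : \prod_(p <- s) p %| 'C(n + n, n).
  apply: prod_primes_dvdn; first by rewrite filter_uniq ?iota_uniq.
    by rewrite all_filter; apply/allP => p _; apply/implyP.
  move=> p ps; apply: prime_dvd_central_bin (s_gt p ps).
  by move: ps; rewrite mem_filter => /andP[].
rewrite -size_filter -/s.
have s_prod : (n ^ size s <= \prod_(p <- s) p)%N.
  rewrite -(count_predT s) -iter_muln_1 -big_const_seq big_seq [leqRHS]big_seq.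
  by apply: leq_prod => p /s_gt /andP[/ltnW].
apply: leq_trans s_prod (leq_trans (dvdn_leq _ s_dvd) _).
  by rewrite bin_gt0 leq_addr.
by apply: leq_trans (leq_bin_exp2 _ _) _; rewrite expnD -expnMn.
Qed.

Lemma count_primes_central_small K n : (4 ^ K < n)%N ->
  (K * count prime (iota n.+1 n) <= n)%N.
Proof.
case: K => [//|K] Kn; set c := count _ _; rewrite leqNgt; apply/negP => n_lt.
have n_pos : (0 < n)%N by lia.
have : (n ^ n <= n ^ (c * K.+1))%N by rewrite leq_pexp2l // mulnC ltnW.
have : (n ^ (c * K.+1) <= (4 ^ K.+1) ^ n)%N.
  by rewrite expnM (expnAC 4) leq_exp2r // count_primes_central_bound.
have : ((4 ^ K.+1) ^ n < n ^ n)%N by rewrite ltn_exp2r.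
lia.
Qed.

Lemma prime_pi_half x :
  (prime_pi x <= prime_pi x./2 + count prime (iota x./2.+1 x./2) + 1)%N.
Proof.
set h := x./2.
have x_eq : x = h + h + odd x by rewrite addnn addnC odd_double_half.
rewrite /prime_pi; have -> : x.+1 = h.+1 + h + odd x by rewrite {1}x_eq !addSn.
rewrite !iotaD !count_cat !add0n leq_add2l.
by rewrite (leq_trans (count_size _ _)) // size_iota leq_b1.
Qed.

Lemma prime_pi_sublinear K :
  exists C, forall x, (K * prime_pi x <= 2 * x + C)%N.
Proof.
set N := (4 ^ K).+1; exists (K * (2 * N)); elim/ltn_ind => x IH.
have [x_small|x_big] := ltnP x (2 * N).
  apply: leq_trans (leq_addl _ _).
  by rewrite leq_mul2l (leq_trans (prime_pi_leq x) x_small) orbT.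
set h := x./2; have x_eq : odd x + (h + h) = x by rewrite addnn odd_double_half.
have K_lt : (K < 4 ^ K)%N by exact: ltn_expl.
have h_lt : (h < x)%N by lia.
have h_big : (4 ^ K < h)%N by lia.
have := IH h h_lt; have := count_primes_central_small K h h_big.
have := leq_mul (leqnn K) (prime_pi_half x); rewrite -/h !mulnDr muln1.
case: (odd x) x_eq => /=; lia.
Qed.

Lemma nth_prime_superlinear K :
  exists m0, forall m, (m0 <= m)%N -> (K * m <= nth_prime m)%N.
Proof.
have [C piC] := prime_pi_sublinear (2 * K + 2); exists C => m Cm.
by have := piC (nth_prime m); rewrite prime_pi_nth_prime; nia.
Qed.

Section Tower.
Variable n : nat.
Hypothesis n_gt0 : (0 < n)%N.

Lemma iter_prime_gt0 k : (0 < iter_prime k n)%N.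
Proof. by elim: k => //= k IH; exact: ltn_trans IH (nth_prime_gt _ IH). Qed.

Lemma iter_prime_ltS k : (iter_prime k n < iter_prime k.+1 n)%N.
Proof. exact: nth_prime_gt _ (iter_prime_gt0 k). Qed.

Lemma iter_prime_nondecreasing : {homo iter_prime ^~ n : i j / (i <= j)%N}.
Proof.
apply: homo_leq => [//|j i k|k]; first exact: leq_trans.
exact/ltnW/iter_prime_ltS.
Qed.

Lemma iter_prime_lacunary K :
  exists k0, forall k, (k0 <= k)%N ->
    (K * iter_prime k n <= iter_prime k.+1 n)%N.
Proof.
have [m0 m0P] := nth_prime_superlinear K; exists m0 => k m0k; apply: m0P.
apply: leq_trans m0k _; elim: k => // k IH.
exact: leq_ltn_trans IH (iter_prime_ltS k).
Qed.

End Tower.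

Lemma primes_tower_sub_range n : primes_tower n `<=` range (iter_prime ^~ n).
Proof. by move=> _ [k _ ->]; exists k. Qed.

Local Open Scope ring_scope.

Lemma R_dense_limit_point (R : realType) (A : set nat) (x : R) :
  R_dense R A -> 0 < x -> limit_point (ratio_set R A) x.
Proof.
move=> dA x_gt0 U /nbhs_ballP[e /= e_gt0 xeU].
have x_lt : x < x + e by rewrite ltrDl.
have [r Ar /andP[xr rxe]] := dA x (x + e) x_gt0 x_lt.
exists r; split => //; first by rewrite gt_eqF.
by apply: xeU; rewrite /ball /= ltr_distlC; lra.
Qed.

Section LacunarySequence.
Variable R : realType.
Variables (a : nat -> nat) (A : set nat).
Hypothesis a_gt0 : forall k, (0 < a k)%N.
Hypothesis a_nondecreasing : {homo a : i j / (i <= j)%N}.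
Hypothesis a_lacunary :
  forall K, exists k0, forall k, (k0 <= k)%N -> (K * a k <= a k.+1)%N.
Hypothesis A_sub : A `<=` range a.

Lemma lacunary_gap K :
  exists k0, forall i j, (i < j)%N -> (k0 < j)%N -> (K * a i <= a j)%N.
Proof.
have [k0 k0P] := a_lacunary K; exists k0 => i [//|j] ij k0j.
by apply: leq_trans (k0P j k0j); rewrite leq_mul2l a_nondecreasing ?orbT.
Qed.

Lemma lacunary_ratio_cvgy : (fun k => (a k.+1)%:R / (a k)%:R : R) @ \oo --> +oo.
Proof.
apply/cvgryPge => M; set K := (Num.truncn `|M|).+1.
have MK : M <= K%:R by rewrite (le_trans (ler_norm M)) // ltW // truncnS_gt.
have [k0 k0P] := a_lacunary K.
near=> k; rewrite ler_pdivlMr ?ltr0n //.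
apply: le_trans (_ : K%:R * (a k)%:R <= _); first by rewrite ler_wpM2r.
by rewrite -natrM ler_nat k0P //; near: k; exact: nbhs_infty_ge.
Unshelve. all: by end_near.
Qed.

Lemma ratio_set_near_finite (x : R) :
  0 < x -> finite_set (ball x (x / 2) `&` ratio_set R A).
Proof.
move=> x_gt0; set K := (Num.truncn (2 * x + 2 / x)).+1.
have K_gt : 2 * x + 2 / x < K%:R by rewrite truncnS_gt.
have Kx_gt2 : 2 < K%:R * x by rewrite -ltr_pdivrMr //; lra.
have K_gt2x : 2 * x < K%:R by rewrite (lt_trans _ K_gt) // ltrDl divr_gt0.
have [k0 gap] := lacunary_gap K.
have small p q : (0 < q)%N -> (K * p <= q)%N -> p%:R / q%:R <= x / 2.
  move=> q_gt0; rewrite -(ler_nat R) natrM ler_pdivrMr ?ltr0n // => Kpq.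
  have : x * (K%:R * p%:R) <= x * q%:R by rewrite ler_wpM2l // ltW.
  have : 0 <= (K%:R * x - 2) * p%:R by rewrite mulr_ge0 // subr_ge0 ltW.
  lra.
have large p q : (0 < q)%N -> (K * q <= p)%N -> 2 * x <= p%:R / q%:R.
  move=> q_gt0; rewrite -(ler_nat R) natrM ler_pdivlMr ?ltr0n // => Kqp.
  have : 2 * x * q%:R <= K%:R * q%:R by rewrite ler_wpM2r // ltW.
  lra.
pose s := [seq (a i)%:R / (a j)%:R : R | i <- iota 0 k0.+1, j <- iota 0 k0.+1].
have mem_s i j : (i <= k0)%N -> (j <= k0)%N -> (a i)%:R / (a j)%:R \in s.
  move=> ik0 jk0; rewrite /s.
  by apply: (allpairs_f (fun i j => (a i)%:R / (a j)%:R : R)); rewrite mem_iota.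
apply: sub_finite_set (finite_seq s).
move=> r [+ [p [q [/A_sub[i _ <-] /A_sub[j _ <-] r_eq]]]] /=; rewrite {}r_eq.
rewrite /ball /= ltr_distlC => /andP[lo hi].
case: (ltngtP i j) => [ij|ji|<-].
- have [jk0|k0j] := leqP j k0; first by rewrite mem_s // ltnW // (leq_trans ij).
  by have := small _ _ (a_gt0 j) (gap i j ij k0j); lra.
- have [ik0|k0i] := leqP i k0; first by rewrite mem_s // ltnW // (leq_trans ji).
  by have := large _ _ (a_gt0 j) (gap j i ji k0i); lra.
- have a_neq0 k : (a k)%:R != 0 :> R by rewrite pnatr_eq0 -lt0n.
  by rewrite divff // -(divff (a_neq0 0%N)) mem_s.
Qed.

Lemma lacunary_no_positive_limit_point :
  limit_point (ratio_set R A) `&` [set x | 0 < x] = set0.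
Proof.
apply/seteqP; split => // x [/limit_point_infinite_setP lp x_gt0].
have x2_gt0 : 0 < x / 2 by rewrite divr_gt0.
by apply: (lp _ (nbhsx_ballx x (x / 2) x2_gt0)); exact: ratio_set_near_finite.
Qed.

End LacunarySequence.

Theorem corollary3 (R : realType) (n : nat) (hn : (0 < n)%N) :
  ~ R_dense R (primes_tower n) /\
  ((fun k : nat => (iter_prime k.+1 n)%:R / (iter_prime k n)%:R : R)
     @ \oo --> +oo) /\
  limit_point (ratio_set R (primes_tower n)) `&` [set x : R | 0 < x] = set0.
Proof.
have a_gt0 := iter_prime_gt0 n hn.
have a_lacunary := iter_prime_lacunary n hn.
have no_limit_point := lacunary_no_positive_limit_point R _ _ a_gt0
  (iter_prime_nondecreasing n hn) a_lacunary (primes_tower_sub_range n).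
split; [|split] => //.
- move=> /R_dense_limit_point/(_ ltr01) limit1.
  by move: no_limit_point; rewrite -subset0 => /(_ 1 (conj limit1 ltr01)).
- exact: lacunary_ratio_cvgy R _ a_gt0 a_lacunary.
Qed.
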